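(* Let $X$ be a finite connected simplicial complex and let $B(X)=B(X,\delta)$ for the bottom perversity $\delta(k)=-k$, graded by path length. Then $B(X)$ is a Koszul algebra.
   Context: Simplices are open; $\Delta\leftrightarrow\Delta'$ means one is a face of the other. For $\delta(k)=-k$, the quiver $Q(X,\delta)$ has vertices the simplices of $X$ and an arrow $\Delta\to\Delta'$ whenever $\Delta$ is a codimension-one face of $\Delta'$. In the path algebra over a field $\mathbb F$ of characteristic $0$ (arrow generators $b(\Delta,\Delta')$, product $xy$ = path $y$ followed by $x$), $B(X)$ is the quotient by the relations $b(\Delta_1,\Delta'')b(\Delta',\Delta_1)=b(\Delta_2,\Delta'')b(\Delta',\Delta_2)$ whenever $\delta(\Delta')=k+1$, $\delta(\Delta_j)=k$, $\delta(\Delta'')=k-1$ and $\Delta'\leftrightarrow\Delta_j\leftrightarrow\Delta''$ ($j=1,2$). A positively graded ring $C=\bigoplus_{j\ge0}C_j$ with $C_0$ semisimple is Koszul if $C_0$ has a graded projective resolution $\cdots\to P^1\to P^0\to C_0\to0$ with each $P^i$ generated by its degree-$i$ component. *)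

From HB Require Import structures.
From mathcomp Require Import all_boot all_order all_algebra.
Set Implicit Arguments. Unset Strict Implicit. Unset Printing Implicit Defensive.
Import GRing.Theory.
Local Open Scope ring_scope.

(* A finite simplicial complex on the finite vertex type V: a family X of
   nonempty finite sets of vertices (the simplices; an abstract simplex s
   stands for the open simplex of dimension #|s| - 1), closed under taking
   nonempty subsets (faces). *)
Definition simplicial_complex (V : finType) (X : {set {set V}}) : Prop :=
  set0 \notin X /\
  forall s t : {set V}, s \in X -> t \subset s -> t != set0 -> t \in X.

Definition simp (V : finType) (X : {set {set V}}) := {s : {set V} | s \in X}.

Definition face_rel (V : finType) (X : {set {set V}}) : rel (simp X) :=
  fun s t => (val s \subset val t) || (val t \subset val s).

Definition sc_connected (V : finType) (X : {set {set V}}) : Prop :=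
  (exists s : simp X, True) /\ forall s t : simp X, connect (@face_rel V X) s t.

Definition is_arrow (V : finType) (X : {set {set V}}) (s t : simp X) : bool :=
  (val s \subset val t) && (#|val t| == (#|val s|).+1)%N.

Definition arrow (V : finType) (X : {set {set V}}) :=
  {p : simp X * simp X | is_arrow p.1 p.2}.

Definition src (V : finType) (X : {set {set V}}) (a : arrow X) : simp X := (val a).1.
Definition tgt (V : finType) (X : {set {set V}}) (a : arrow X) : simp X := (val a).2.

(* B(X) is the path algebra F Q(X,delta) (generated by the vertex idempotents
   e_Delta in degree 0 and the arrows b(Delta,Delta') in degree 1, subject to
   e_D e_G = [D = G] e_D, sum_D e_D = 1, e_{tgt a} a e_{src a} = a) modulo
   the relations b(D1,D'')b(D',D1) = b(D2,D'')b(D',D2).  A graded left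
   B(X)-module is a Z-graded F-vector space with a degree-preserving action of
   the degree-0 generators and a degree-raising-by-one action of the arrows,
   all linear, satisfying these defining relations.  (Product xy = path y
   followed by x acts as (action of x) o (action of y).) *)
Record gmod (F : fieldType) (V : finType) (X : {set {set V}}) := GMod {
  gcar :> int -> lmodType F;
  gidem : simp X -> forall n : int, gcar n -> gcar n;
  garr : arrow X -> forall n : int, gcar n -> gcar (n + 1)
}.
Arguments gcar {F V X} g n.
Arguments gidem {F V X} g D n _.
Arguments garr {F V X} g a n _.

Definition lin_map (F : fieldType) (U W : lmodType F) (f : U -> W) : Prop :=
  forall (a : F) (x y : U), f (a *: x + y) = a *: f x + f y.

Definition is_gmod (F : fieldType) (V : finType) (X : {set {set V}})
    (M : gmod F X) : Prop :=
  (forall D n, lin_map (gidem M D n)) /\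
  (forall a n, lin_map (garr M a n)) /\
  [/\
      (forall D G n (x : M n),
          gidem M D n (gidem M G n x) = if D == G then gidem M D n x else 0),
      (forall n (x : M n), \sum_(D : simp X) gidem M D n x = x),
      (forall a n (x : M n),
          garr M a n x = gidem M (tgt a) (n + 1) (garr M a n (gidem M (src a) n x)))
    & (forall a1 a2 a3 a4 : arrow X,
          src a1 = src a3 -> tgt a1 = src a2 -> tgt a3 = src a4 ->
          tgt a2 = tgt a4 ->
          forall n (x : M n),
            garr M a2 (n + 1) (garr M a1 n x) = garr M a4 (n + 1) (garr M a3 n x))].

Definition gmor (F : fieldType) (V : finType) (X : {set {set V}})
    (M N : gmod F X) (f : forall n, M n -> N n) : Prop :=
  [/\ (forall n, lin_map (f n)),
      (forall D n (x : M n), f n (gidem M D n x) = gidem N D n (f n x))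
    & (forall a n (x : M n), f (n + 1) (garr M a n x) = garr N a n (f n x))].

Arguments gmor {F V X} M N f.

Definition gprojective (F : fieldType) (V : finType) (X : {set {set V}})
    (P : gmod F X) : Prop :=
  forall (N Q : gmod F X) (g : forall n, N n -> Q n) (f : forall n, P n -> Q n),
    is_gmod N -> is_gmod Q -> gmor N Q g -> gmor P Q f ->
    (forall n (y : Q n), exists x : N n, g n x = y) ->
    exists h : forall n, P n -> N n,
      gmor P N h /\ forall n (x : P n), g n (h n x) = f n x.

(* P is generated (as a B(X)-module) by its degree-i component: the only
   graded submodule containing P_i is P itself. *)
Definition generated_in_degree (F : fieldType) (V : finType) (X : {set {set V}})
    (P : gmod F X) (i : int) : Prop :=
  forall Sub : forall n, P n -> Prop,
    (forall n, Sub n 0) ->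
    (forall n (x y : P n), Sub n x -> Sub n y -> Sub n (x + y)) ->
    (forall n (c : F) (x : P n), Sub n x -> Sub n (c *: x)) ->
    (forall D n (x : P n), Sub n x -> Sub n (gidem P D n x)) ->
    (forall a n (x : P n), Sub n x -> Sub (n + 1) (garr P a n x)) ->
    (forall x : P i, Sub i x) ->
    forall n (x : P n), Sub n x.

(* Concentrated in degree 0, where it is F^{simplices} (basis e_Delta);
   e_Delta acts by projection on the e_Delta-coordinate, arrows act by 0. *)
Section C0.
Variables (F : fieldType) (V : finType) (X : {set {set V}}).

Definition C0car (n : int) : lmodType F :=
  if n == 0 then ({ffun simp X -> F^o} : lmodType F)
  else ({ffun void -> F^o} : lmodType F).

Definition C0idem (D : simp X) (n : int) : C0car n -> C0car n :=
  match n == 0 as b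
    return GRing.Lmodule.sort (if b then ({ffun simp X -> F^o} : lmodType F)
                              else ({ffun void -> F^o} : lmodType F)) ->
           GRing.Lmodule.sort (if b then ({ffun simp X -> F^o} : lmodType F)
                              else ({ffun void -> F^o} : lmodType F))
  with
  | true => fun f : {ffun simp X -> F^o} => [ffun G => if G == D then f G else 0]
  | false => fun f => f
  end.

Definition C0 : gmod F X := @GMod F V X C0car C0idem (fun a n _ => 0).
End C0.

Definition B_koszul (F : fieldType) (V : finType) (X : {set {set V}}) : Prop :=
  exists (P : nat -> gmod F X)
         (d : forall (i : nat) (n : int), P i.+1 n -> P i n)
         (eps : forall n : int, P 0%N n -> C0 F X n),
    (forall i, is_gmod (P i)) /\
    (forall i, gprojective (P i)) /\
    (forall i : nat, generated_in_degree (P i) i%:Z) /\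
    [/\
        (forall i, gmor (P i.+1) (P i) (d i)),
        gmor (P 0%N) (C0 F X) eps,
        (forall n (y : C0 F X n), exists x : P 0%N n, eps n x = y),
        (forall n (x : P 0%N n), eps n x = 0 <-> exists y, d 0%N n y = x)
      & (forall i n (x : P i.+1 n), d i n x = 0 <-> exists y, d i.+1 n y = x)].

From HB Require Import structures.
From mathcomp Require Import all_boot all_order all_algebra zify ring.
From Stdlib Require Import ClassicalEpsilon Eqdep_dec.
Set Implicit Arguments. Unset Strict Implicit. Unset Printing Implicit Defensive.
Import GRing.Theory.
Local Open Scope ring_scope.

(* For the bottom perversity any two paths of Q(X, δ) with the same ends are identified,
   so B(X) e_H has a basis indexed by the simplices G ⊇ H.  The Koszul resolution of C_0
   is then explicit: P^i is the direct sum of the modules B(X) e_(D ∪ S), generated in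
   degree i, over the simplices D and the i-sets S disjoint from D with D ∪ S a simplex.
   Its basis vectors are the triples (D, G, S) with D ∪ S ⊆ G, in degree |G| - |D|.  The
   differential deletes a vertex of S with Koszul signs, and inserting the least vertex
   of G \ D into S is a contracting homotopy, which gives exactness.  Each B(X) e_H is
   projective because a vector v = e_H v of a module can be pushed along any chain of
   codimension-one faces from H up to G, and by the commutativity relations the result
   does not depend on the chain: two chains ending through distinct faces A, B of G can
   both be rerouted through A ∩ B. *)

Lemma codim1_facesI (V : finType) (G A B : {set V}) :
  A \subset G -> B \subset G -> #|G| = #|A|.+1 -> #|G| = #|B|.+1 -> A != B ->
  #|A| = (#|A :&: B|).+1 /\ #|B| = (#|A :&: B|).+1.
Proof.
move=> sAG sBG cA cB neAB.
have cAB : #|A :|: B| = #|G|.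
  apply/eqP; rewrite eqn_leq subset_leq_card ?subUset ?sAG //= cA ltnNge.
  apply: contra neAB => leBA.
  have /eqP AUB : A == A :|: B by rewrite eqEcard subsetUl leBA.
  have sBA : B \subset A by rewrite AUB subsetUr.
  by rewrite eq_sym eqEcard sBA /= -ltnS -cB -cA.
have := cardsUI A B; rewrite cAB => cUI; split; lia.
Qed.

Lemma setU1D1 (T : finType) (S : {set T}) (w v : T) :
  w != v -> (w |: S) :\ v = w |: (S :\ v).
Proof.
move=> ne; apply/setP => x; rewrite !inE.
by case: (eqVneq x v) => // ->; rewrite eq_sym (negbTE ne).
Qed.

(* Pairing the terms along the order [r], instead of halving, works in every characteristic. *)
Lemma sum_antisym (R : zmodType) (I : finType) (r : I -> nat) (A : I -> I -> R) :
  injective r -> (forall w, A w w = 0) -> (forall w u, A u w = - A w u) ->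
  \sum_w \sum_u A w u = 0.
Proof.
move=> r_inj A0 Aanti.
have E w u : A w u = A w u *+ (r u < r w) - A u w *+ (r w < r u).
  case: ltngtP => [_|_|/r_inj ->].
  - by rewrite mulr1n mulr0n subr0.
  - by rewrite mulr0n mulr1n sub0r Aanti.
  - by rewrite A0 !mul0rn subrr.
under eq_bigr => w _ do rewrite (eq_bigr _ (fun u _ => E w u)) sumrB.
by rewrite sumrB [X in _ - X]exchange_big subrr.
Qed.

Lemma lin_map0 (F : fieldType) (U W : lmodType F) (h : U -> W) : lin_map h -> h 0 = 0.
Proof. by move=> hlin; have := hlin (-1) 0 0; rewrite scaler0 addr0 scaleN1r addNr. Qed.

Lemma lin_map_sum (F : fieldType) (U W : lmodType F) (h : U -> W) (I : finType)
    (c : I -> F) (u : I -> U) :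
  lin_map h -> h (\sum_j c j *: u j) = \sum_j c j *: h (u j).
Proof. by move=> hlin; elim/big_rec2: _ => [|j y1 y2 _ <-]; rewrite ?lin_map0 ?hlin. Qed.

Section Simplices.
Variables (V : finType) (X : {set {set V}}).
Hypothesis hX : simplicial_complex X.

Lemma simp_neq0 (D : simp X) : val D != set0.
Proof. by case: D => D DX /=; apply: contraNneq hX.1 => <-. Qed.

Lemma superset_neq0 (D : simp X) (A : {set V}) : val D \subset A -> A != set0.
Proof. by move=> sDA; apply: contraNneq (simp_neq0 D) => A0; rewrite -subset0 -A0. Qed.

Lemma arrowP (a : arrow X) :
  val (src a) \subset val (tgt a) /\ #|val (tgt a)| = #|val (src a)|.+1.
Proof. by case: a => [[s t] h]; rewrite /src /tgt /=; case/andP: h => sst /eqP. Qed.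

Lemma arrow_inj (a b : arrow X) : src a = src b -> tgt a = tgt b -> a = b.
Proof.
case: a b => [[s t] ha] [[s' t'] hb]; rewrite /src /tgt /= => es et.
by apply: val_inj; rewrite /= es et.
Qed.

Lemma codim1_face (G : simp X) (v : V) : v \in val G -> val G :\ v != set0 ->
  exists a : arrow X, val (src a) = val G :\ v /\ tgt a = G.
Proof.
move=> vG Gv0.
pose Gv : simp X := exist _ (val G :\ v) (hX.2 _ _ (valP G) (subsetDl _ _) Gv0).
have a_arrow : is_arrow Gv G by rewrite /is_arrow /= subsetDl (cardsD1 v (val G)) vG; apply: eqxx.
by exists (exist _ (Gv, G) a_arrow); split.
Qed.

End Simplices.

(** * Transport along chains of faces *)

Section Transport.
Variables (F : fieldType) (V : finType) (X : {set {set V}}) (N : gmod F X).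

Definition pt := {n : int & N n}.

Definition push (a : arrow X) (p : pt) : pt :=
  existT _ (projT1 p + 1) (garr N a _ (projT2 p)).

Inductive reach (G0 : simp X) (p0 : pt) : simp X -> pt -> Prop :=
  | reach_refl : reach G0 p0 G0 p0
  | reach_push a p : reach G0 p0 (src a) p -> reach G0 p0 (tgt a) (push a p).

Lemma reach_grade (G0 : simp X) (p0 : pt) (G : simp X) (p : pt) : reach G0 p0 G p ->
  val G0 \subset val G /\ projT1 p = projT1 p0 + (#|val G| - #|val G0|)%N%:Z.
Proof.
elim=> [|a r _ [sG0 er]]; first by rewrite subxx subnn addr0.
have [sa ca] := arrowP a; have le := subset_leq_card sG0.
split; first exact: subset_trans sa.
by rewrite /= er -addrA -PoszD ca subSn // addn1.
Qed.

Lemma reach_inv (G0 : simp X) (p0 : pt) (G : simp X) (p : pt) : reach G0 p0 G p ->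
  (G = G0 /\ p = p0) \/ exists a r, [/\ G = tgt a, p = push a r & reach G0 p0 (src a) r].
Proof. by case=> [|a r h]; [left | right; exists a, r]. Qed.

Lemma reach_idem (G0 : simp X) (p0 : pt) (G : simp X) (p : pt) : is_gmod N ->
  gidem N G0 _ (projT2 p0) = projT2 p0 -> reach G0 p0 G p ->
  gidem N G _ (projT2 p) = projT2 p.
Proof.
move=> [_ [_ [idem_idem _ arr_idem _]]] e0.
by elim=> // a [n z] _ _ /=; rewrite arr_idem idem_idem eqxx.
Qed.

Hypothesis hX : simplicial_complex X.

Lemma reach_total (G0 : simp X) (p0 : pt) (G : simp X) :
  val G0 \subset val G -> exists p, reach G0 p0 G p.
Proof.
move: {2}(#|val G| - #|val G0|)%N (erefl (#|val G| - #|val G0|)%N) => k.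
elim: k G => [|k IH] G kG sG0.
  have -> : G = G0 by apply/val_inj/eqP; rewrite eq_sym eqEcard sG0 -subn_eq0 kG.
  by exists p0; constructor.
have /properP [_ [v vG vG0]] : val G0 \proper val G by rewrite properEcard sG0 -subn_gt0 kG.
have sG0v : val G0 \subset val G :\ v.
  by apply/subsetP => x xG0; rewrite !inE (subsetP sG0) // andbT; apply: contraNneq vG0 => <-.
have [a [sa ta]] := codim1_face hX vG (superset_neq0 hX sG0v).
have [r hr] : exists r, reach G0 p0 (src a) r.
  apply: IH; last by rewrite sa.
  by move: kG; rewrite sa (cardsD1 v (val G)) vG; have := subset_leq_card sG0v; lia.
by exists (push a r); rewrite -ta; constructor.
Qed.

Lemma reach_to (G0 : simp X) (p0 : pt) (G : simp X) (n : int) : val G0 \subset val G ->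
  n = projT1 p0 + (#|val G| - #|val G0|)%N%:Z -> exists z : N n, reach G0 p0 G (existT _ n z).
Proof.
move=> sG0 ->; have [[m z] hz] := reach_total p0 sG0.
by have [_ /= em] := reach_grade hz; rewrite -em; exists z.
Qed.

Hypothesis hN : is_gmod N.

Lemma reach_functional (G0 : simp X) (p0 : pt) (G : simp X) (p q : pt) :
  reach G0 p0 G p -> reach G0 p0 G q -> p = q.
Proof.
have [_ [_ [_ _ _ arr_comm]]] := hN.
move: {2}(#|val G|).+1 (ltnSn #|val G|) => k.
elim: k G p q => // k IH G p q Gk hp hq.
have not_refl a r : reach G0 p0 (src a) r -> tgt a != G0.
  move=> /reach_grade [sG0 _]; apply: contraTneq (subset_leq_card sG0) => <-.
  by rewrite (arrowP a).2 ltnn.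
case: (reach_inv hp) => [[eG ->]|[a [r [eGa -> hr]]]];
case: (reach_inv hq) => [[eG' ->]|[b [r' [eGb -> hr']]]] //.
- by move: (not_refl _ _ hr'); rewrite -eGb eG eqxx.
- by move: (not_refl _ _ hr); rewrite -eGa eG' eqxx.
have ltk c : tgt c = G -> (#|val (src c)| < k)%N.
  by move=> eG; rewrite -ltnS -(arrowP c).2 eG.
have lta := ltk a (esym eGa); have ltb := ltk b (esym eGb).
have [eab|neab] := eqVneq (src a) (src b).
  have -> : a = b by apply: arrow_inj; rewrite // -eGa -eGb.
  by rewrite -eab in hr'; rewrite (IH _ _ _ lta hr hr').
pose Cab := val (src a) :&: val (src b).
have [sa ca] := arrowP a; have [sb cb] := arrowP b; rewrite -eGa in sa ca; rewrite -eGb in sb cb.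
have [cA cB] : #|val (src a)| = #|Cab|.+1 /\ #|val (src b)| = #|Cab|.+1.
  by apply: codim1_facesI sa sb ca cb _; rewrite val_eqE.
have [s0a _] := reach_grade hr; have [s0b _] := reach_grade hr'.
have s0C : val G0 \subset Cab by rewrite subsetI s0a.
pose C : simp X :=
  exist (fun s => s \in X) Cab (hX.2 _ _ (valP (src a)) (subsetIl _ _) (superset_neq0 hX s0C)).
have [c1 c2] : is_arrow C (src a) /\ is_arrow C (src b).
  by rewrite /is_arrow subsetIl subsetIr cA cB !eqxx.
have [w hw] := @reach_total G0 p0 C s0C.
rewrite (IH _ _ _ lta hr (@reach_push _ _ (exist _ (C, src a) c1) _ hw)).
rewrite (IH _ _ _ ltb hr' (@reach_push _ _ (exist _ (C, src b) c2) _ hw)).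
by rewrite /push /=; congr existT; apply: arr_comm; rewrite // -eGa -eGb.
Qed.

Lemma reach_fun (G0 : simp X) (p0 : pt) (G : simp X) (n : int) (z z' : N n) :
  reach G0 p0 G (existT _ n z) -> reach G0 p0 G (existT _ n z') -> z = z'.
Proof.
move=> hz hz'; exact: inj_pair2_eq_dec _ (@eq_comparable _) _ _ _ _ (reach_functional hz hz').
Qed.

End Transport.

(** * The modules P^i *)

Section Coordinates.
Variables (F : fieldType) (V : finType) (X : {set {set V}}).

Definition triple := (simp X * simp X * {set V})%type.
Definition tD (t : triple) : simp X := t.1.1.
Definition tG (t : triple) : simp X := t.1.2.
Definition tS (t : triple) : {set V} := t.2.

Definition kbasis (i : nat) (n : int) (t : triple) : bool :=
  [&& val (tD t) \subset val (tG t), tS t \subset val (tG t) :\: val (tD t),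
      #|tS t| == i & n == (#|val (tG t)| - #|val (tD t)|)%N%:Z].

Definition kindex i n := {t : triple | kbasis i n t}.
Definition Pcar i n : lmodType F := ({ffun kindex i n -> F^o} : lmodType F).

Definition kcoef i n (f : Pcar i n) (t : triple) : F :=
  if insub t is Some u then f u else 0.
Definition kvec i n (phi : triple -> F) : Pcar i n := [ffun u => phi (val u)].
Definition kdelta i n (t0 : triple) : Pcar i n := kvec i n (fun t => (t == t0)%:R).

Lemma kcoef_kvec i n phi t : kcoef (kvec i n phi) t = if kbasis i n t then phi t else 0.
Proof. by rewrite /kcoef; case: insubP => [u -> <-|/negbTE ->] //; rewrite ffunE. Qed.

Lemma kcoef_out i n (f : Pcar i n) t : ~~ kbasis i n t -> kcoef f t = 0.
Proof. by rewrite /kcoef; case: insubP => [u -> //|]. Qed.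

Lemma kcoef_neq0 i n (f : Pcar i n) t : kcoef f t != 0 -> kbasis i n t.
Proof. by apply: contraR => /(kcoef_out f) ->. Qed.

Lemma kcoefP i n (f g : Pcar i n) :
  (forall t, kbasis i n t -> kcoef f t = kcoef g t) -> f = g.
Proof. by move=> fg; apply/ffunP => u; have := fg _ (valP u); rewrite /kcoef valK. Qed.

Lemma kcoefD i n (f g : Pcar i n) t : kcoef (f + g) t = kcoef f t + kcoef g t.
Proof. by rewrite /kcoef; case: insub => [u|]; rewrite ?ffunE ?addr0. Qed.

Lemma kcoefZ i n c (f : Pcar i n) t : kcoef (c *: f) t = c * kcoef f t.
Proof. by rewrite /kcoef; case: insub => [u|]; rewrite ?ffunE ?mulr0. Qed.

Lemma kcoef0 i n t : kcoef (0 : Pcar i n) t = 0.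
Proof. by rewrite /kcoef; case: insub => [u|]; rewrite ?ffunE. Qed.

Lemma kcoef_sum i n (I : finType) (f : I -> Pcar i n) t :
  kcoef (\sum_j f j) t = \sum_j kcoef (f j) t.
Proof. by elim/big_rec2: _ => [|j y g _ <-]; rewrite ?kcoef0 ?kcoefD. Qed.

Lemma kcoef_kdelta i n t0 t : kcoef (kdelta i n t0) t = (kbasis i n t && (t == t0))%:R.
Proof. by rewrite kcoef_kvec; case: ifP. Qed.

Lemma kvec_decomp i n (f : Pcar i n) : f = \sum_t kcoef f t *: kdelta i n t.
Proof.
apply: kcoefP => t vt; rewrite kcoef_sum (bigD1 t) //= big1 ?addr0.
  by rewrite kcoefZ kcoef_kdelta vt eqxx mulr1.
by move=> t' ne; rewrite kcoefZ kcoef_kdelta vt eq_sym (negbTE ne) mulr0.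
Qed.

Lemma kcoef_notsubD i n (f : Pcar i n) (D G : simp X) (S : {set V}) :
  ~~ (val D \subset val G) -> kcoef f (D, G, S) = 0.
Proof. by move=> nsD; apply: kcoef_out; rewrite /kbasis /= (negbTE nsD). Qed.

Lemma kcoef_notsubS i n (f : Pcar i n) (D G : simp X) (S : {set V}) :
  ~~ (S \subset val G :\: val D) -> kcoef f (D, G, S) = 0.
Proof. by move=> nsS; apply: kcoef_out; rewrite /kbasis /= (negbTE nsS) andbF. Qed.

End Coordinates.

Arguments tD {V X} t /.
Arguments tG {V X} t /.
Arguments tS {V X} t /.

Section KoszulBasis.
Variables (V : finType) (X : {set {set V}}).
Implicit Types (D G : simp X) (S : {set V}) (a : arrow X).

Lemma kbasis_push i n a D S : kbasis i n (D, src a, S) -> kbasis i (n + 1) (D, tgt a, S).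
Proof.
have [sa ca] := arrowP a; case/and4P=> /= sD sS cS /eqP ->.
rewrite /kbasis /= cS (subset_trans sD sa) (subset_trans sS (setSD _ sa)) ca /=.
by apply/eqP; rewrite subSn ?subset_leq_card // -addn1 PoszD.
Qed.

Lemma kbasis_pull i n a D S : kbasis i (n + 1) (D, tgt a, S) ->
  val D \subset val (src a) -> S \subset val (src a) -> kbasis i n (D, src a, S).
Proof.
have [_ ca] := arrowP a; case/and4P=> /= _ sS cS /eqP en sD sSa.
move: sS; rewrite subsetD => /andP [_ dSD].
rewrite /kbasis /= sD cS subsetD sSa dSD /=.
by move: en; rewrite ca subSn ?subset_leq_card // -addn1 PoszD => /addIr ->.
Qed.

Lemma kbasis_lift i n D (G0 : simp X) G S : kbasis i i (D, G0, S) -> val G0 \subset val G ->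
  kbasis i n (D, G, S) = (n == i%:Z + (#|val G| - #|val G0|)%N%:Z).
Proof.
case/and4P=> /= sD sS cS /eqP [e0] sG0.
have le0 := subset_leq_card sD; have le := subset_leq_card sG0.
rewrite /kbasis /= cS (subset_trans sD sG0) (subset_trans sS (setSD _ sG0)) /=.
by rewrite -PoszD; congr (_ == Posz _); lia.
Qed.

Lemma kbasis_setU1 i n D G S w : kbasis i n (D, G, S) -> w \notin S ->
  kbasis i.+1 n (D, G, w |: S) = (w \in val G :\: val D).
Proof.
case/and4P=> /= sD sS /eqP cS en wS.
by rewrite /kbasis /= sD en cardsU1 wS cS subUset sub1set sS /= eqxx !andbT.
Qed.

Lemma kbasis_setD1 i n D G S v : kbasis i.+1 n (D, G, S) -> v \in S ->
  kbasis i n (D, G, S :\ v).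
Proof.
case/and4P=> /= sD sS cS en vS.
rewrite /kbasis /= sD en (subset_trans (subsetDl _ _) sS) andbT /=.
by move: cS; rewrite (cardsD1 v S) vS.
Qed.

Hypothesis hX : simplicial_complex X.

Lemma kbasis_gen i n D G S : kbasis i n (D, G, S) ->
  exists G0, [/\ val G0 = val D :|: S, kbasis i i (D, G0, S) & val G0 \subset val G].
Proof.
case/and4P=> /= sD sS /eqP cS _.
have sDS : val D :|: S \subset val G by rewrite subUset sD (subset_trans sS (subsetDl _ _)).
have DSX := hX.2 _ _ (valP G) sDS (superset_neq0 hX (subsetUl (val D) S)).
exists (exist (fun s => s \in X) _ DSX); split => //=.
have dSD : [disjoint S & val D] by move: sS; rewrite subsetD => /andP [].
rewrite /kbasis /= subsetUl cS eqxx subsetD subsetUr dSD /=.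
have dDS : [disjoint val D & S] by rewrite disjoint_sym.
by rewrite cardsU (disjoint_setI0 dDS) cards0 subn0 addKn cS.
Qed.

End KoszulBasis.

Lemma reach_kbasis (F : fieldType) (V : finType) (X : {set {set V}}) (N : gmod F X)
    i D (G0 : simp X) S (p0 : pt N) G p :
  kbasis i i (D, G0, S) -> projT1 p0 = i%:Z -> reach G0 p0 G p -> kbasis i (projT1 p) (D, G, S).
Proof. by move=> v0 e0 /reach_grade [sG0 ->]; rewrite (kbasis_lift _ v0 sG0) e0. Qed.

Section KoszulModule.
Variables (F : fieldType) (V : finType) (X : {set {set V}}).
Local Notation Pcar := (Pcar F X).
Local Notation kdelta := (kdelta F).

Definition Pidem i (D : simp X) n (f : Pcar i n) : Pcar i n :=
  kvec i n (fun t => if tG t == D then kcoef f t else 0).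

Definition Parr i (a : arrow X) n (f : Pcar i n) : Pcar i (n + 1) :=
  kvec i (n + 1) (fun t => if tG t == tgt a then kcoef f (tD t, src a, tS t) else 0).

Definition Pmod i : gmod F X :=
  @GMod F V X (Pcar i) (fun D n => @Pidem i D n) (fun a n => @Parr i a n).

Lemma kcoef_Pidem i D n (f : Pcar i n) t :
  kcoef (Pidem D f) t = if tG t == D then kcoef f t else 0.
Proof. by rewrite kcoef_kvec; case: ifP => // /negbT /(kcoef_out f) ->; rewrite if_same. Qed.

Lemma kcoef_Parr i a n (f : Pcar i n) t :
  kcoef (Parr a f) t = if tG t == tgt a then kcoef f (tD t, src a, tS t) else 0.
Proof.
rewrite kcoef_kvec; case: ifP => // vt; case: eqP => // eG.
by rewrite kcoef_out //; apply: contraFN vt; case: t eG => [[D G] S] /= ->; apply: kbasis_push.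
Qed.

Lemma Pmod_gmod i : is_gmod (Pmod i).
Proof.
split; [|split; [|split]].
- move=> D n c x y; apply: kcoefP => t _.
  by rewrite !(kcoef_Pidem, kcoefD, kcoefZ); case: ifP; rewrite ?mulr0 ?addr0.
- move=> a n c x y; apply: kcoefP => t _.
  by rewrite !(kcoef_Parr, kcoefD, kcoefZ); case: ifP; rewrite ?mulr0 ?addr0.
- move=> D G n x; apply: kcoefP => t _.
  have [<-|neDG] := eqVneq D G; first by rewrite !kcoef_Pidem; case: eqP.
  rewrite kcoef0 !kcoef_Pidem; case: eqP => // ->.
  by rewrite (negbTE neDG).
- move=> n x; apply: kcoefP => t _.
  rewrite kcoef_sum (bigD1 (tG t)) //= big1 ?addr0; first by rewrite kcoef_Pidem eqxx.
  by move=> D neD; rewrite kcoef_Pidem eq_sym (negbTE neD).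
- move=> a n x; apply: kcoefP => t _.
  by rewrite !(kcoef_Pidem, kcoef_Parr) /=; case: ifP => // _; rewrite eqxx.
- move=> a1 a2 a3 a4 e13 e12 e34 e24 n x; apply: kcoefP => t _.
  by rewrite !kcoef_Parr /= -e12 -e34 e13 e24 !eqxx; case: ifP.
Qed.

Lemma Pidem_kdelta i n D t0 :
  Pidem D (kdelta i n t0) = if tG t0 == D then kdelta i n t0 else 0.
Proof.
apply: kcoefP => t _; rewrite kcoef_Pidem kcoef_kdelta.
have [->|ne] := eqVneq t t0; first by case: ifP; rewrite ?kcoef_kdelta ?kcoef0 ?eqxx.
by rewrite andbF mulr0n if_same; case: ifP; rewrite ?kcoef_kdelta ?kcoef0 ?(negbTE ne) ?andbF.
Qed.

Lemma Parr_kdelta i n a D S : kbasis i n (D, src a, S) ->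
  Parr a (kdelta i n (D, src a, S)) = kdelta i (n + 1) (D, tgt a, S).
Proof.
move=> vt; apply: kcoefP => [[[D' G'] S']] vt'.
rewrite kcoef_Parr !kcoef_kdelta vt' /= !xpair_eqE eqxx andbT.
case: eqP => _; rewrite ?andbT ?andbF //.
by case: eqP => [->|]; case: eqP => [->|]; rewrite ?vt ?andbF.
Qed.

Lemma Parr_kdelta0 i n a t : tG t != src a -> Parr a (kdelta i n t) = 0.
Proof.
move=> ne; apply: kcoefP => u _; rewrite kcoef_Parr kcoef0 kcoef_kdelta.
case: ifP => // _; case: eqP => [et|]; last by rewrite andbF.
by move: ne; rewrite -et eqxx.
Qed.

End KoszulModule.

(** * Generation and projectivity *)

Section Generation.
Variables (F : fieldType) (V : finType) (X : {set {set V}}).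
Hypothesis hX : simplicial_complex X.
Variable i : nat.

Lemma reach_kdelta D (G0 : simp X) S G p : kbasis i i (D, G0, S) ->
  reach (N := Pmod F X i) G0 (existT _ i%:Z (kdelta F i i (D, G0, S))) G p ->
  projT2 p = kdelta F i (projT1 p) (D, G, S).
Proof.
move=> v0; elim=> [//|a [m z] hr /= ->].
by rewrite Parr_kdelta // (reach_kbasis v0 _ hr).
Qed.

Lemma Pmod_generated : generated_in_degree (Pmod F X i) i%:Z.
Proof.
move=> Sub Sub0 SubD SubZ _ SubA Subi.
have Sub_kdelta n t : kbasis i n t -> Sub n (kdelta F i n t).
  case: t => [[D G] S] vt; have [G0 [_ v0 sG0]] := kbasis_gen hX vt.
  pose p0 := existT (fun m => Pmod F X i m) i%:Z (kdelta F i i (D, G0, S)).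
  have [z hz] : exists z, reach G0 p0 G (existT _ n z).
    by apply: (reach_to hX (p0 := p0) sG0); move: vt; rewrite (kbasis_lift _ v0 sG0) => /eqP.
  have /= <- := reach_kdelta v0 hz.
  have Sub_reach G' p : reach G0 p0 G' p -> Sub (projT1 p) (projT2 p).
    by elim=> [|a r _]; [apply: Subi | apply: SubA].
  exact: Sub_reach hz.
move=> n x; rewrite (kvec_decomp x); elim/big_ind: _ => // [|t _]; first exact: SubD.
have [vt|nvt] := boolP (kbasis i n t); first by apply/SubZ/Sub_kdelta.
by rewrite kcoef_out // scale0r.
Qed.

End Generation.

Section Lift.
Variables (F : fieldType) (V : finType) (X : {set {set V}}).
Hypothesis hX : simplicial_complex X.
Variables (i : nat) (N Q : gmod F X).
Hypothesis hN : is_gmod N.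
Unset Implicit Arguments.
Variables (g : forall n, N n -> Q n) (f : forall n, Pmod F X i n -> Q n).
Set Implicit Arguments.
Hypotheses (hg : gmor N Q g) (hf : gmor (Pmod F X i) Q f).
Hypothesis g_onto : forall n (y : Q n), exists x : N n, g n x = y.

(* Projecting onto e_(tG t0) makes the lift commute with the idempotents. *)
Definition seed (t0 : triple X) : pt N := existT _ i%:Z
  (gidem N (tG t0) i (epsilon (inhabits 0) (fun x : N i => g i x = f i (kdelta F i i t0)))).

Lemma g_seed t0 : g i (projT2 (seed t0)) = f i (kdelta F i i t0).
Proof.
have [_ gI _] := hg; have [_ fI _] := hf.
by rewrite /= gI (epsilon_spec (inhabits 0) _ (g_onto _)) -fI /= Pidem_kdelta eqxx.
Qed.

Definition lift_basis n (t : triple X) : N n :=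
  epsilon (inhabits 0) (fun z : N n => exists G0 : simp X,
    val G0 = val (tD t) :|: tS t /\ reach G0 (seed (tD t, G0, tS t)) (tG t) (existT _ n z)).

Lemma lift_basisP n t : kbasis i n t -> exists G0 : simp X,
  [/\ val G0 = val (tD t) :|: tS t, kbasis i i (tD t, G0, tS t) &
      reach G0 (seed (tD t, G0, tS t)) (tG t) (existT _ n (lift_basis n t))].
Proof.
case: t => [[D G] S] vt; have [G0 [eG0 v0 sG0]] := kbasis_gen hX vt.
have [z hz] : exists z, reach G0 (seed (D, G0, S)) G (existT _ n z).
  apply: (reach_to hX (p0 := seed (D, G0, S)) sG0).
  by move: vt; rewrite (kbasis_lift _ v0 sG0) => /eqP.
have : exists z, exists G1 : simp X,
    val G1 = val D :|: S /\ reach G1 (seed (D, G1, S)) G (existT _ n z) by exists z, G0.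
move=> /(epsilon_spec (inhabits 0)) [G1 [eG1 hG1]].
have eG : G1 = G0 by apply: val_inj; rewrite eG1 eG0.
by exists G0; split; [exact: eG0 | exact: v0 | rewrite -eG; exact: hG1].
Qed.

Lemma lift_basis_eq n t (G0 : simp X) (z : N n) : kbasis i n t ->
  val G0 = val (tD t) :|: tS t ->
  reach G0 (seed (tD t, G0, tS t)) (tG t) (existT _ n z) -> lift_basis n t = z.
Proof.
move=> vt eG0 hz; have [G1 [eG1 _ hG1]] := lift_basisP vt.
have eG : G1 = G0 by apply: val_inj; rewrite eG1 eG0.
by rewrite eG in hG1; exact: (reach_fun hX hN hG1 hz).
Qed.

Lemma lift_basis_idem n t : kbasis i n t -> gidem N (tG t) n (lift_basis n t) = lift_basis n t.
Proof.
move=> vt; have [G0 [_ _ hG0]] := lift_basisP vt.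
apply: (reach_idem hN _ hG0) => /=.
by have [_ [_ [idem_idem _ _ _]]] := hN; rewrite idem_idem eqxx.
Qed.

Lemma g_reach D (G0 : simp X) S G p : kbasis i i (D, G0, S) ->
  reach G0 (seed (D, G0, S)) G p ->
  g (projT1 p) (projT2 p) = f (projT1 p) (kdelta F i (projT1 p) (D, G, S)).
Proof.
move=> v0; have [_ _ gA] := hg; have [_ _ fA] := hf.
elim=> [|a [m z] hr /= IH]; first exact: g_seed.
by rewrite gA IH -fA /= Parr_kdelta // (reach_kbasis v0 _ hr).
Qed.

Definition lift n (x : Pcar F X i n) : N n := \sum_t kcoef x t *: lift_basis n t.

Lemma lift_kdelta n t : kbasis i n t -> lift (kdelta F i n t) = lift_basis n t.
Proof.
move=> vt; rewrite /lift (bigD1 t) //= big1 ?addr0.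
  by rewrite kcoef_kdelta vt eqxx scale1r.
by move=> t' ne; rewrite kcoef_kdelta (negbTE ne) andbF scale0r.
Qed.

Lemma lift_gmor : gmor (Pmod F X i) N lift.
Proof.
have [linI [linA [idem_idem _ arr_idem _]]] := hN.
have lin_lift n : lin_map (@lift n).
  move=> c x y; rewrite /lift scaler_sumr -big_split; apply: eq_bigr => t _.
  by rewrite kcoefD kcoefZ scalerDl scalerA.
split=> // [D n x | a n x].
  rewrite /= {2}/lift (lin_map_sum _ _ (linI D n)); apply: eq_bigr => t _.
  rewrite kcoef_Pidem; have [->|/kcoef_neq0 vt] := eqVneq (kcoef x t) 0.
    by rewrite if_same !scale0r.
  rewrite -{2}(lift_basis_idem vt) idem_idem.
  by have [<-|neD] := eqVneq (tG t) D; rewrite ?lift_basis_idem ?scale0r ?scaler0.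
rewrite (kvec_decomp x) !(lin_map_sum _ _ (lin_lift _)) (lin_map_sum _ _ (linA a n)).
rewrite (lin_map_sum _ _ ((Pmod_gmod F X i).2.1 a n)) (lin_map_sum _ _ (lin_lift _)).
apply: eq_bigr => t _; have [->|/kcoef_neq0 vt] := eqVneq (kcoef x t) 0; first by rewrite !scale0r.
congr (_ *: _); rewrite lift_kdelta //.
have [esrc|ne] := eqVneq (tG t) (src a); last first.
  rewrite /= Parr_kdelta0 // lin_map0 // arr_idem -(lift_basis_idem vt) idem_idem.
  by rewrite eq_sym (negbTE ne) lin_map0 // lin_map0.
case: t esrc vt => [[D G] S] /= -> vt.
rewrite /= Parr_kdelta // lift_kdelta; last exact: kbasis_push.
have [G0 [eG0 v0 hG0]] := lift_basisP vt.
exact: lift_basis_eq (kbasis_push vt) eG0 (reach_push hG0).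
Qed.

Lemma g_lift n (x : Pcar F X i n) : g n (lift x) = f n x.
Proof.
have [glin _ _] := hg; have [flin _ _] := hf.
rewrite {2}(kvec_decomp x) /lift (lin_map_sum _ _ (glin n)) (lin_map_sum _ _ (flin n)).
apply: eq_bigr => t _; have [->|/kcoef_neq0 vt] := eqVneq (kcoef x t) 0; first by rewrite !scale0r.
congr (_ *: _); case: t vt => [[D G] S] vt.
by have [G0 [_ v0 hG0]] := lift_basisP vt; apply: (g_reach v0 hG0).
Qed.

End Lift.

Lemma Pmod_projective (F : fieldType) (V : finType) (X : {set {set V}}) i :
  simplicial_complex X -> gprojective (Pmod F X i).
Proof.
move=> hX N Q g f hN _ hg hf g_onto.
by exists (lift g f); split; [apply: lift_gmor | apply: g_lift].
Qed.

(** * The differential and its contracting homotopy *)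

Section Signs.
Variables (R : ringType) (V : finType).

Definition rk (v : V) : nat := enum_rank v.

Lemma rk_inj : injective rk.
Proof. by move=> u v /val_inj /enum_rank_inj. Qed.

Definition ksign (S : {set V}) (w : V) : R := (-1) ^+ #|[set u in S | (rk u < rk w)%N]|.

Lemma ksign_setU1 (S : {set V}) (v w : V) : v \notin S ->
  ksign (v |: S) w = (if (rk v < rk w)%N then -1 else 1) * ksign S w.
Proof.
move=> vS; rewrite /ksign; set T := [set u in S | _].
have -> : [set u in v |: S | (rk u < rk w)%N] = if (rk v < rk w)%N then v |: T else T.
  by apply/setP => u; case: ifP => lt; rewrite !inE; case: eqP => // ->; rewrite ?lt ?(negbTE vS).
case: ifP => _; last by rewrite mul1r.
by rewrite cardsU1 inE (negbTE vS) -exprS.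
Qed.

Lemma ksign_min (S : {set V}) (v : V) : (forall u, u \in S -> (rk v <= rk u)%N) -> ksign S v = 1.
Proof.
move=> vmin; rewrite /ksign (_ : [set u in S | _] = set0) ?cards0 //.
by apply/setP => u; rewrite !inE; apply/negbTE/andP => -[/vmin]; rewrite leqNgt => /negbTE ->.
Qed.

End Signs.

Section Differential.
Variables (F : fieldType) (V : finType) (X : {set {set V}}).
Local Notation Pcar := (Pcar F X).
Local Notation ksign := (ksign F).
Implicit Types (D G : simp X) (S : {set V}).







Definition kd i n (f : Pcar i.+1 n) : Pcar i n :=
  kvec i n (fun t => \sum_(w | w \notin tS t) ksign (tS t) w * kcoef f (tD t, tG t, w |: tS t)).

Lemma kd_gmor i : gmor (Pmod F X i.+1) (Pmod F X i) (@kd i).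
Proof.
split.
- move=> n c x y; apply: kcoefP => t vt; rewrite kcoefD kcoefZ !kcoef_kvec vt.
  rewrite mulr_sumr -big_split /=; apply: eq_bigr => w _.
  by rewrite kcoefD kcoefZ mulrDr mulrCA.
- move=> D n x; apply: kcoefP => t vt /=; rewrite kcoef_Pidem !kcoef_kvec vt.
  case: ifP => eD; first by apply: eq_bigr => w _; rewrite kcoef_Pidem /= eD.
  by rewrite big1 // => w _; rewrite kcoef_Pidem /= eD mulr0.
- move=> a n x; apply: kcoefP => [[[D G] S]] vt /=; rewrite kcoef_Parr !kcoef_kvec vt /=.
  have [eG|neG] := eqVneq G (tgt a); last first.
    by rewrite big1 // => w _; rewrite kcoef_Parr /= (negbTE neG) mulr0.
  subst G.
  case: ifP => vt'; first by apply: eq_bigr => w _; rewrite kcoef_Parr /= eqxx.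
  rewrite big1 // => w _; rewrite kcoef_Parr /= eqxx.
  have [sD|nsD] := boolP (val D \subset val (src a)); last by rewrite kcoef_notsubD ?mulr0.
  have [sS|nsS] := boolP (S \subset val (src a)); first by rewrite (kbasis_pull vt sD sS) in vt'.
  rewrite kcoef_notsubS ?mulr0 //; apply: contra nsS => sWS.
  by apply: subset_trans (subset_trans _ sWS) (subsetDl _ _); apply: subsetUr.
Qed.

Lemma kd_kd i n (f : Pcar i.+2 n) : kd (kd f) = 0.
Proof.
apply: kcoefP => [[[D G] S]] vt; rewrite kcoef0 kcoef_kvec vt /=.
have kd_setU1 w : w \notin S -> kcoef (kd f) (D, G, w |: S) =
    \sum_(u | u \notin w |: S) ksign (w |: S) u * kcoef f (D, G, u |: (w |: S)).
  move=> wS; rewrite kcoef_kvec /= (kbasis_setU1 vt wS); case: ifP => // wGD.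
  symmetry; rewrite big1 // => u _; rewrite kcoef_notsubS ?mulr0 //.
  by apply: contraFN wGD => /subsetP; apply; rewrite !inE eqxx orbT.
pose A w u := if [&& w \notin S, u \notin S & u != w]
  then ksign S w * ksign (w |: S) u * kcoef f (D, G, u |: (w |: S)) else 0.
transitivity (\sum_w \sum_u A w u); last first.
  apply: (sum_antisym (@rk_inj V)) => [w|w u]; first by rewrite /A eqxx !andbF.
  rewrite /A [u == w]eq_sym; case: (boolP [&& w \notin S, u \notin S & w != u]); last first.
    by rewrite andbCA => /negbTE ->; rewrite oppr0.
  case/and3P=> wS uS neq; rewrite uS wS neq setUCA !ksign_setU1 //.
  by case: ltngtP => [_|_|/rk_inj eq] /=; [ring | ring | rewrite eq eqxx in neq].
rewrite big_mkcond; apply: eq_bigr => w _; rewrite /A.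
have [wS|wS] := boolP (w \in S); first by rewrite big1.
rewrite kd_setU1 // mulr_sumr big_mkcond; apply: eq_bigr => u _; rewrite !inE negb_or.
by case: (u \in S); case: (eqVneq u w); rewrite //= mulrA.
Qed.

Definition least (A : {set V}) : option V :=
  [pick v in A | [forall u in A, rk u >= rk v]%N].

Lemma leastP (A : {set V}) : A != set0 ->
  exists2 v, least A = Some v & v \in A /\ forall u, u \in A -> (rk v <= rk u)%N.
Proof.
move=> /set0Pn [v0 v0A]; rewrite /least; case: pickP => [v /andP [vA /forall_inP vmin]|none].
  by exists v.
have [v vA vmin] := arg_minnP (@rk V) v0A.
move: (none v) => /negbT; rewrite negb_and (vA : v \in A) /=.
by case/forall_inPn => u uA; rewrite vmin.
Qed.

Definition ks i n (f : Pcar i n) : Pcar i.+1 n :=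
  kvec i.+1 n (fun t => if least (val (tG t) :\: val (tD t)) is Some v then
     (if v \in tS t then kcoef f (tD t, tG t, tS t :\ v) else 0) else 0).

Lemma ks0 i n : ks (0 : Pcar i n) = 0.
Proof.
by apply: kcoefP => t _; rewrite kcoef_kvec kcoef0; case: least => [v|]; rewrite ?kcoef0 !if_same.
Qed.

Section LeastVertex.
Variables (D G : simp X) (v : V).
Hypotheses (lv : least (val G :\: val D) = Some v) (vGD : v \in val G :\: val D)
  (vmin : forall u, u \in val G :\: val D -> (rk v <= rk u)%N).

Lemma kd_ks_out i n (f : Pcar i n) S : kbasis i n (D, G, S) -> v \notin S ->
  kcoef (kd (ks f)) (D, G, S) = kcoef f (D, G, S).
Proof.
move=> vt vS; rewrite kcoef_kvec vt /= (bigD1 v) //= big1 ?addr0.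
  rewrite kcoef_kvec (kbasis_setU1 vt vS) vGD /= lv setU11 setU1K //.
  rewrite ksign_min ?mul1r // => u uS; apply: vmin.
  by case/and4P: vt => _ /subsetP sS _ _; apply: sS.
move=> w /andP [wS ne]; rewrite kcoef_kvec /= lv.
by rewrite !inE eq_sym (negbTE ne) (negbTE vS) /= !if_same mulr0.
Qed.

Lemma kd_ks_in i n (f : Pcar i n) S : kbasis i n (D, G, S) -> v \in S ->
  kcoef (kd (ks f)) (D, G, S) = \sum_(w | w \notin S) ksign S w * kcoef f (D, G, w |: (S :\ v)).
Proof.
move=> vt vS; rewrite kcoef_kvec vt /=; apply: eq_bigr => w wS; congr (_ * _).
have ne : w != v by apply: contraNneq wS => ->.
rewrite kcoef_kvec /= lv (setU1r w vS) (kbasis_setU1 vt wS).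
case: ifP => wGD; first by rewrite setU1D1.
by rewrite kcoef_notsubS //; apply: contraFN wGD => /subsetP; apply; rewrite !inE eqxx.
Qed.

Lemma ks_kd_in i n (f : Pcar i.+1 n) S : kbasis i.+1 n (D, G, S) -> v \in S ->
  kcoef (ks (kd f)) (D, G, S) =
    kcoef f (D, G, S) + \sum_(w | w \notin S) ksign (S :\ v) w * kcoef f (D, G, w |: (S :\ v)).
Proof.
move=> vt vS; rewrite kcoef_kvec vt /= lv vS kcoef_kvec (kbasis_setD1 vt vS) /=.
rewrite (bigD1 v) ?setD11 //=; congr (_ + _).
  rewrite setD1K // ksign_min ?mul1r // => u; rewrite inE => /andP [_ uS]; apply: vmin.
  by case/and4P: vt => _ /subsetP sS _ _; apply: sS.
by apply: eq_bigl => w; rewrite !inE; case: (eqVneq w v) => [->|_] /=; rewrite ?vS ?andbT.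
Qed.

Lemma ks_kd_out i n (f : Pcar i.+1 n) S : v \notin S -> kcoef (ks (kd f)) (D, G, S) = 0.
Proof. by move=> vS; rewrite kcoef_kvec /= lv (negbTE vS) !if_same. Qed.

End LeastVertex.

Lemma kd_ks_homotopy i n (f : Pcar i.+1 n) t : kbasis i.+1 n t ->
  kcoef (kd (ks f)) t + kcoef (ks (kd f)) t = kcoef f t.
Proof.
case: t => [[D G] S] vt; have [_ sS /eqP cS _] := and4P vt.
have GD0 : val G :\: val D != set0.
  have /set0Pn [x xS] : S != set0 by rewrite -card_gt0 cS.
  by apply/set0Pn; exists x; apply: (subsetP sS).
have [v lv [vGD vmin]] := leastP GD0.
have [vS|vS] := boolP (v \in S); last first.
  by rewrite (kd_ks_out lv vGD vmin f vt vS) (ks_kd_out lv f vS) addr0.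
rewrite (kd_ks_in lv f vt vS) (ks_kd_in lv vmin f vt vS) addrCA -big_split /= big1 ?addr0 //.
move=> w wS; rewrite -mulrDl.
have [wGD|wGD] := boolP (w \in val G :\: val D); last first.
  by rewrite kcoef_notsubS ?mulr0 //; apply: contra wGD => /subsetP; apply; rewrite !inE eqxx.
have lt_vw : (rk v < rk w)%N.
  by rewrite ltn_neqAle vmin // andbT; apply: contraNneq wS => /rk_inj <-.
by rewrite -{1}(setD1K vS) ksign_setU1 ?setD11 // lt_vw mulN1r addNr mul0r.
Qed.

Lemma kd_ks0 n (f : Pcar 0 n) D G S : kbasis 0 n (D, G, S) -> G != D ->
  kcoef (kd (ks f)) (D, G, S) = kcoef f (D, G, S).
Proof.
move=> vt neGD; have [sD _ /eqP /cards0_eq S0 _] := and4P vt.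
have GD0 : val G :\: val D != set0.
  by apply: contra neGD; rewrite setD_eq0 => sGD; apply/eqP/val_inj/eqP; rewrite eqEsubset sGD.
have [v lv [vGD vmin]] := leastP GD0.
by apply: (kd_ks_out lv vGD vmin f vt); rewrite (S0 : S = set0) inE.
Qed.

Lemma kd_exact i n (x : Pcar i.+1 n) : kd x = 0 <-> exists y : Pcar i.+2 n, kd y = x.
Proof.
split=> [x0|[y <-]]; last exact: kd_kd.
exists (ks x); apply: kcoefP => t vt.
by have := kd_ks_homotopy x vt; rewrite x0 ks0 kcoef0 addr0.
Qed.

End Differential.

(** * The augmentation P^0 -> C_0 *)

Section Augmentation.
Variables (F : fieldType) (V : finType) (X : {set {set V}}).
Local Notation Pcar := (Pcar F X).
Local Notation C0vec := {ffun simp X -> F^o}.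

Definition aug n (f : Pcar 0 n) : C0 F X n :=
  if n == 0 as b return GRing.Lmodule.sort (if b then (C0vec : lmodType F)
                                            else ({ffun void -> F^o} : lmodType F))
  then [ffun D => kcoef f (D, D, set0)] else 0.

Lemma C0_subsingleton n (x y : C0 F X n) : n != 0 -> x = y.
Proof.
move: x y; rewrite /= /C0car => x y /negbTE n0; move: x y; rewrite n0 => x y.
by apply/ffunP => -[].
Qed.

Lemma aug_deg0 (f : Pcar 0 0) : aug f = [ffun D => kcoef f (D, D, set0)] :> C0vec.
Proof. by []. Qed.

Lemma aug_eq0 n (f : Pcar 0 n) : (forall D, kcoef f (D, D, set0) = 0) -> aug f = 0.
Proof.
move=> f0; have [n0|] := eqVneq n 0; last exact: C0_subsingleton.
subst n; apply/ffunP => D; rewrite aug_deg0 ffunE f0.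
by change (0 = (0 : C0vec) D); rewrite ffunE.
Qed.

Lemma aug_gmor : gmor (Pmod F X 0) (C0 F X) (@aug).
Proof.
split.
- move=> n c x y; have [n0|] := eqVneq n 0; last exact: C0_subsingleton.
  subst n; apply/ffunP => D.
  change ((aug (c *: x + y) : C0vec) D = (c *: (aug x : C0vec) + (aug y : C0vec)) D).
  by rewrite !ffunE ?aug_deg0 ?ffunE kcoefD kcoefZ.
- move=> D n x; have [n0|] := eqVneq n 0; last exact: C0_subsingleton.
  subst n; apply/ffunP => G.
  change ((aug (Pidem D x) : C0vec) G = [ffun G => if G == D then (aug x : C0vec) G else 0] G).
  by rewrite !ffunE ?aug_deg0 ?ffunE kcoef_Pidem /=; case: ifP; rewrite ?ffunE.
- move=> a n x /=; apply: aug_eq0 => D; rewrite kcoef_Parr /=.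
  case: eqVneq => // eD; rewrite kcoef_notsubD // eD.
  by apply: contraTN isT => /subset_leq_card; rewrite (arrowP a).2 ltnn.
Qed.

Lemma aug_onto n (y : C0 F X n) : exists x : Pcar 0 n, aug x = y.
Proof.
have [n0|] := eqVneq n 0; last by exists 0; exact: C0_subsingleton.
subst n; exists (kvec 0 0 (fun t => if tG t == tD t then (y : C0vec) (tD t) else 0)).
apply/ffunP => D; rewrite aug_deg0 ffunE kcoef_kvec /= eqxx.
by rewrite /kbasis /= subxx sub0set cards0 subnn.
Qed.

Lemma kd_diag n (y : Pcar 1 n) D S : kcoef (kd y) (D, D, S) = 0.
Proof.
rewrite kcoef_kvec; case: ifP => // _; rewrite big1 // => w _.
by rewrite kcoef_notsubS ?mulr0 //= setDv subset0; apply/set0Pn; exists w; rewrite setU11.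
Qed.

Lemma aug_exact n (x : Pcar 0 n) : aug x = 0 <-> exists y : Pcar 1 n, kd y = x.
Proof.
split=> [x0|[y <-]]; last by apply: aug_eq0 => D; apply: kd_diag.
exists (ks x); apply: kcoefP => [[[D G] S]] vt.
have [eGD|neGD] := eqVneq G D; last exact: kd_ks0.
subst G; rewrite kd_diag.
have [_ sS _ /eqP en] := and4P vt; rewrite /= subnn in en; subst n.
rewrite /= setDv subset0 in sS; rewrite (eqP sS).
move/ffunP: x0 => /(_ D); rewrite aug_deg0 ffunE => ->.
by change (0 = (0 : C0vec) D); rewrite ffunE.
Qed.

End Augmentation.

Theorem lemma4p2p4 (F : fieldType) (V : finType) (X : {set {set V}}) :
  [pchar F]%R =i pred0 ->
  simplicial_complex X ->
  sc_connected X ->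
  B_koszul F X.
Proof.
move=> _ hX _.
exists (Pmod F X), (fun i n => @kd F V X i n), (@aug F V X).
split; first exact: Pmod_gmod.
split; first by move=> i; apply: Pmod_projective.
split; first by move=> i; apply: Pmod_generated.
split; [exact: kd_gmor | exact: aug_gmor | exact: aug_onto | exact: aug_exact | exact: kd_exact].
Qed.
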